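(* Let $H=P_4$ (the path $1-2-3-4$) and let $G_1,G_2$ be graphs where $G_i$ is $d_i$-regular of order $n_i$ with adjacency eigenvalues $d_i=\lambda_1(A(G_i)),\dots,\lambda_{n_i}(A(G_i))$, $i=1,2$. Let $G=\bigvee_{P_4}\{G_1,G_2,G_2',G_1'\}$, where $G_1'$, $G_2'$ are disjoint copies of $G_1$, $G_2$ assigned to vertices $4$ and $3$ respectively, and let $s\in\mathbb{R}$. Set $$a(s)=s^2(d_1+n_2-1)-sd_1+1,\qquad b(s)=s^2(d_2+(n_1+n_2)-1)-sd_2+1,$$ $\sigma(M_1(s))=\{s^2(d_1+n_2-1)-s\lambda_k(A(G_1))+1\}_{k=1}^{n_1}$ and $\sigma(M_2(s))=\{s^2(d_2+n_1+n_2-1)-s\lambda_k(A(G_2))+1\}_{k=1}^{n_2}$. Then $$\sigma(M_G(s))=\big(\sigma(M_1(s))^{[2]}-\{a(s)^{[2]}\}\big)\cup\big(\sigma(M_2(s))^{[2]}-\{b(s)^{[2]}\}\big)\cup\sigma(F_4(s)),$$ where $X^{[2]}$ denotes the multiset $X$ with every multiplicity doubled, $\{a(s)^{[2]}\}$ denotes two copies of $a(s)$, and $$\sigma(F_4(s))=\Big\{\tfrac12\big(a(s)+b(s)+sn_2\pm\sqrt{(a(s)-b(s)-sn_2)^2+4s^2n_1n_2}\big),\ \tfrac12\big(a(s)+b(s)-sn_2\pm\sqrt{(a(s)-b(s)+sn_2)^2+4s^2n_1n_2}\big)\Big\}.$$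
   Context: For a simple undirected graph $G$ with adjacency matrix $A$, degree matrix $D$ and identity $I$, and real $s$, the deformed Laplacian matrix is $M_G(s)=I-sA+s^2(D-I)$; $\sigma(\cdot)$ is the multiset of eigenvalues. $H$-join: given a graph $H$ on vertex set $\{1,\dots,r\}$ and pairwise vertex-disjoint graphs $G_1,\dots,G_r$, $\bigvee_H\{G_i\}$ has vertex set $\bigcup_iV(G_i)$ and edges $\bigcup_iE(G_i)$ together with all edges $uv$, $u\in V(G_i)$, $v\in V(G_j)$, for each $ij\in E(H)$. *)

From HB Require Import structures.
From mathcomp Require Import all_boot all_order all_algebra.
Set Implicit Arguments.
Unset Strict Implicit.
Unset Printing Implicit Defensive.
Import Order.TTheory GRing.Theory Num.Theory.
Local Open Scope ring_scope.

Definition simple_graph (T : finType) (e : rel T) : Prop :=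
  symmetric e /\ irreflexive e.

Definition deg (T : finType) (e : rel T) (v : T) : nat := #|[set u | e v u]|.

Definition regular (T : finType) (e : rel T) (d : nat) : Prop :=
  forall v, deg e v = d.

Definition adjmx (R : nzRingType) (T : finType) (e : rel T) : 'M[R]_#|T| :=
  \matrix_(i, j) (e (enum_val i) (enum_val j))%:R.

Definition degmx (R : nzRingType) (T : finType) (e : rel T) : 'M[R]_#|T| :=
  diag_mx (\row_i (deg e (enum_val i))%:R).

Definition deformed_laplacian (R : comNzRingType) (T : finType) (e : rel T) (s : R)
  : 'M[R]_#|T| :=
  1%:M - s *: adjmx R e + s ^+ 2 *: (degmx R e - 1%:M).

(* sigma(A) = l as multisets: l lists the eigenvalues of A with algebraic multiplicity. *)
Definition spectrum_is (R : comNzRingType) (n : nat) (A : 'M[R]_n) (l : seq R) : Prop :=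
  char_poly A = \prod_(x <- l) ('X - x%:P).

(* H-join: vertex set V partitioned by part : V -> 'I_r; e is the disjoint union of the
   graphs G_i (edges only inside parts); add all edges between parts i, j with ij in E(H). *)
Definition hjoin (r : nat) (H : rel 'I_r) (V : finType) (part : V -> 'I_r) (e : rel V)
  : rel V :=
  fun u v => ((part u == part v) && e u v) || H (part u) (part v).

Definition path_graph (n : nat) : rel 'I_n :=
  fun i j => (i.+1 == j :> nat) || (j.+1 == i :> nat).

Definition sum_rel (T1 T2 : finType) (e1 : rel T1) (e2 : rel T2) : rel (T1 + T2)%type :=
  fun u v => match u, v with
             | inl a, inl b => e1 a b
             | inr a, inr b => e2 a b
             | _, _ => false
             end.

(* Vertex set of the P_4-join of {G1, G2, G2', G1'} : parts 0,1,2,3 in this order. *)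
Definition P4_vert (V1 V2 : finType) : finType := (((V1 + V2) + V2) + V1)%type.

Definition P4_part (V1 V2 : finType) (x : P4_vert V1 V2) : 'I_4 :=
  match x with
  | inl (inl (inl _)) => inord 0
  | inl (inl (inr _)) => inord 1
  | inl (inr _) => inord 2
  | inr _ => inord 3
  end.

Definition P4_join (V1 V2 : finType) (G1 : rel V1) (G2 : rel V2) : rel (P4_vert V1 V2) :=
  hjoin (@path_graph 4) (@P4_part V1 V2) (sum_rel (sum_rel (sum_rel G1 G2) G2) G1).

From HB Require Import structures.
From mathcomp Require Import all_boot all_order all_algebra.
From mathcomp Require Import fingroup perm ring.
Set Implicit Arguments. Unset Strict Implicit. Unset Printing Implicit Defensive.
Import Order.TTheory GRing.Theory Num.Theory.
Local Open Scope ring_scope.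

(* The partition of the vertices of G into the four copies is equitable for M_G(s):
   each row of M_G(s) has constant sum over each part.  Conjugating M_G(s) by the
   unitriangular matrix that adds the column of every non-representative vertex to the
   column of the representative of its part makes it block triangular, with the 4 x 4
   quotient matrix in one corner and, in the other, one block c I - s B per copy, where
   B is the adjacency matrix of G_i reduced at its representative.  The same argument
   for the regular graph G_i alone shows that B has the spectrum of A(G_i) with one
   copy of d_i removed, and the characteristic polynomial of the quotient matrix is the
   product of the two quadratics whose roots form sigma(F_4(s)). *)

Section KernelMatrices.
Variable R : fieldType.
Implicit Types T U : finType.

(* Indexed like [adjmx], so that [adjmx R G] is [fun_mx (fun x y => (G x y)%:R)]. *)
Definition fun_mx T (F : T -> T -> R) : 'M[R]_#|T| :=
  \matrix_(i, j) F (enum_val i) (enum_val j).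

Definition char_fun T (F : T -> T -> R) : {poly R} := char_poly (fun_mx F).

Lemma eq_char_fun T (F G : T -> T -> R) : F =2 G -> char_fun F = char_fun G.
Proof. by move=> eFG; congr char_poly; apply/matrixP => i j; rewrite !mxE eFG. Qed.

Lemma char_poly_conj n (A P Q : 'M[R]_n) :
  Q *m P = 1%:M -> char_poly (Q *m A *m P) = char_poly A.
Proof.
move=> QP; have PQ := mulmx1C QP.
have /= QP' : map_mx polyC Q *m map_mx polyC P = 1%:M :> 'M[{poly R}]_n.
  by rewrite -map_mxM QP map_mx1.
have /= PQ' : map_mx polyC P *m map_mx polyC Q = 1%:M :> 'M[{poly R}]_n.
  by rewrite -map_mxM PQ map_mx1.
rewrite /char_poly /char_poly_mx.
have -> : 'X%:M - map_mx polyC (Q *m A *m P) =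
          map_mx polyC Q *m ('X%:M - map_mx polyC A) *m map_mx polyC P.
  by rewrite mulmxBr mulmxBl !map_mxM mul_mx_scalar -scalemxAl QP' scalemx1.
by rewrite !det_mulmx mulrC mulrA -det_mulmx PQ' det1 mul1r.
Qed.

Lemma char_poly_perm n (s : 'S_n) (A : 'M[R]_n) :
  char_poly (\matrix_(i, j) A (s i) (s j)) = char_poly A.
Proof.
have -> : \matrix_(i, j) A (s i) (s j) = perm_mx s *m A *m perm_mx s^-1.
  by rewrite -row_permE -col_permE; apply/matrixP => i j; rewrite !mxE.
by apply: char_poly_conj; rewrite -perm_mxM mulgV perm_mx1.
Qed.

Lemma char_poly_castmx n m (e : n = m) (A : 'M[R]_n) :
  char_poly (castmx (e, e) A) = char_poly A.
Proof. by case: m / e; rewrite castmx_id. Qed.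

Lemma char_fun_ord T n (g : 'I_n -> T) (F : T -> T -> R) : bijective g ->
  char_poly (\matrix_(i, j) F (g i) (g j)) = char_fun F.
Proof.
move=> g_bij.
have e : n = #|T| by rewrite -[n]card_ord; apply: bij_eq_card g_bij.
pose f i := enum_rank (g (cast_ord (esym e) i)).
have f_inj : injective f.
  by move=> i j /enum_rank_inj /(bij_inj g_bij) /cast_ord_inj.
rewrite -(char_poly_castmx e) /char_fun -[RHS](char_poly_perm (perm f_inj)).
congr char_poly.
by apply/matrixP => i j; rewrite castmxE !mxE !permE /f !enum_rankK.
Qed.

Lemma char_fun_reindex T U (h : U -> T) (F : T -> T -> R) : bijective h ->
  char_fun (fun u v => F (h u) (h v)) = char_fun F.
Proof.
move=> h_bij; apply: (char_fun_ord (g := fun i => h (enum_val i))).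
exact: bij_comp h_bij (enum_val_bij U).
Qed.

Lemma char_poly_block_ut n1 n2 (A : 'M[R]_n1) B (D : 'M[R]_n2) :
  char_poly (block_mx A B 0 D) = char_poly A * char_poly D.
Proof.
rewrite /char_poly /char_poly_mx map_block_mx map_mx0 scalar_mx_block.
by rewrite opp_block_mx add_block_mx oppr0 addr0 det_ublock.
Qed.

Lemma char_fun_sum T1 T2 (F : T1 + T2 -> T1 + T2 -> R) :
  (forall x y, F (inr x) (inl y) = 0) ->
  char_fun F = char_fun (fun x y => F (inl x) (inl y)) *
               char_fun (fun x y => F (inr x) (inr y)).
Proof.
move=> F0.
pose g (i : 'I_(#|T1| + #|T2|)) : T1 + T2 :=
  match split i with inl a => inl (enum_val a) | inr b => inr (enum_val b) end.
pose g' (x : T1 + T2) : 'I_(#|T1| + #|T2|) :=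
  match x with inl a => lshift _ (enum_rank a) | inr b => rshift _ (enum_rank b) end.
have g_bij : bijective g.
  exists g'.
    by move=> i; rewrite /g -[RHS]splitK; case: (split i) => a /=; rewrite enum_valK.
  by case=> a; rewrite /g ?(unsplitK (inl _)) ?(unsplitK (inr _)) enum_rankK.
pose B : 'M_(#|T1|, #|T2|) := \matrix_(i, j) F (inl (enum_val i)) (inr (enum_val j)).
rewrite -(char_fun_ord F g_bij) -(char_poly_block_ut _ B); congr char_poly.
apply/matrixP => i j; rewrite -[i]splitK -[j]splitK /g.
by case: (split i) => a; case: (split j) => b;
   rewrite ?block_mxEul ?block_mxEur ?block_mxEdl ?block_mxEdr !mxE
     ?(unsplitK (inl _)) ?(unsplitK (inr _)) /= ?F0.
Qed.

Definition fun_mul T (F G : T -> T -> R) x y := \sum_z F x z * G z y.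

Definition fun_one T (x y : T) : R := (x == y)%:R.

Lemma fun_mx_mul T (F G : T -> T -> R) : fun_mx (fun_mul F G) = fun_mx F *m fun_mx G.
Proof.
apply/matrixP => i j; rewrite !mxE /fun_mul (reindex (fun k : 'I_#|T| => enum_val k)) /=.
  by apply: eq_bigr => k _; rewrite !mxE.
exact/onW_bij/enum_val_bij.
Qed.

Lemma fun_mx_one T : fun_mx (@fun_one T) = 1%:M.
Proof. by apply/matrixP => i j; rewrite !mxE /fun_one (inj_eq enum_val_inj). Qed.

Lemma char_fun_similar T (M N P P' : T -> T -> R) :
  fun_mul M P =2 fun_mul P N -> fun_mul P' P =2 @fun_one T ->
  char_fun M = char_fun N.
Proof.
move=> MP P'P.
have {}MP : fun_mx M *m fun_mx P = fun_mx P *m fun_mx N.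
  by rewrite -!fun_mx_mul; apply/matrixP => i j; rewrite !mxE MP.
have {}P'P : fun_mx P' *m fun_mx P = 1%:M.
  by rewrite -fun_mx_mul -fun_mx_one; apply/matrixP => i j; rewrite !mxE P'P.
rewrite /char_fun -(char_poly_conj (fun_mx M) P'P) -mulmxA MP mulmxA P'P.
by rewrite mul1mx.
Qed.

Lemma sum_fun_one_mull T (u : T) (f : T -> R) : \sum_z fun_one u z * f z = f u.
Proof.
rewrite (bigD1 u) //= /fun_one eqxx mul1r big1 ?addr0 // => z /negbTE.
by rewrite eq_sym => ->; rewrite mul0r.
Qed.

Lemma sum_fun_one_mulr T (v : T) (f : T -> R) : \sum_z f z * fun_one z v = f v.
Proof.
rewrite (bigD1 v) //= /fun_one eqxx mulr1 big1 ?addr0 // => z /negbTE ->.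
by rewrite mulr0.
Qed.

End KernelMatrices.

Arguments fun_one {R T} x y.

Section EquitablePartition.
Variables (R : fieldType) (T W : finType) (k : nat).
Variables (part : T -> 'I_k) (h : 'I_k + W -> T).
Hypotheses (h_bij : bijective h) (part_rep : forall j, part (h (inl j)) = j).
Variables (F : T -> T -> R) (Q : 'I_k -> 'I_k -> R).
Hypothesis sum_part : forall x j, \sum_(z | part z == j) F x z = Q (part x) j.

Let G u v := F (h u) (h v).
(* K sends each non-representative to the representative of its part; K * K = 0, so
   1 - K inverts P = 1 + K, and G P = P N with N block upper triangular. *)
Let K (u v : 'I_k + W) : R :=
  if (u, v) is (inr w, inl j) then fun_one (part (h (inr w))) j else 0.
Let P u v := fun_one u v + K u v.
Let P' u v := fun_one u v - K u v.
Let N (u v : 'I_k + W) : R :=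
  match u, v with
  | inl i, inl j => Q i j
  | inl i, inr w' => G u v
  | inr w, inl j => 0
  | inr w, inr w' => G u v - G (inl (part (h u))) v
  end.

Let sum_G_part u j : \sum_z G u z * fun_one (part (h z)) j = Q (part (h u)) j.
Proof.
rewrite -sum_part /G [RHS](reindex h) /=; last exact: onW_bij.
rewrite [RHS]big_mkcond; apply: eq_bigr => z _.
by rewrite /fun_one; case: eqP; rewrite ?mulr1 ?mulr0.
Qed.

Let GP_PN u v : fun_mul G P u v = fun_mul P N u v.
Proof.
rewrite /fun_mul /P.
under eq_bigr do rewrite mulrDr.
under [RHS]eq_bigr do rewrite mulrDl.
rewrite !big_split /= sum_fun_one_mulr sum_fun_one_mull.
case: v => [j|w'].
  have -> : G u (inl j) + \sum_z G u z * K z (inl j) = Q (part (h u)) j.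
    rewrite -sum_G_part big_sumType [RHS]big_sumType /=.
    rewrite [X in _ + (X + _)]big1 ?add0r; last by move=> i _; rewrite mulr0.
    congr (_ + _); rewrite -(sum_fun_one_mulr j (fun i => G u (inl i))).
    by apply: eq_bigr => i _; rewrite part_rep.
  case: u => [i|w] /=.
    by rewrite part_rep big1 ?addr0 // => z _; rewrite mul0r.
  rewrite big_sumType /= add0r sum_fun_one_mull big1 ?addr0 // => z _.
  by rewrite mul0r.
rewrite big1 ?addr0; last by case=> z _; rewrite mulr0.
case: u => [i|w] /=.
  by rewrite big1 ?addr0 // => z _; rewrite mul0r.
rewrite big_sumType /= sum_fun_one_mull big1 ?addr0; last by move=> z _; rewrite mul0r.
by rewrite subrK.
Qed.

Let P'P u v : fun_mul P' P u v = fun_one u v.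
Proof.
rewrite /fun_mul /P'.
under eq_bigr do rewrite mulrBl.
rewrite sumrB sum_fun_one_mull /P.
case: u => [i|w] /=.
  by rewrite big1 ?subr0 ?addr0 // => z _; rewrite mul0r.
rewrite big_sumType /= sum_fun_one_mull big1 ?addr0; last by move=> z _; rewrite mul0r.
by case: v => [j|w'] /=; rewrite /fun_one /= ?subr0 ?addr0 ?addrK.
Qed.

Lemma char_fun_equitable :
  char_fun F = char_poly (\matrix_(i, j) Q i j) *
    char_fun (fun w w' => F (h (inr w)) (h (inr w')) -
                          F (h (inl (part (h (inr w))))) (h (inr w'))).
Proof.
rewrite -(char_fun_reindex F h_bij) (char_fun_similar GP_PN P'P).
rewrite (@char_fun_sum _ _ _ N) //; congr (_ * _).
by rewrite -(@char_fun_ord _ _ _ id) //; exists id.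
Qed.

End EquitablePartition.

Lemma char_poly_affine (R : fieldType) n (B : 'M[R]_n) (l : seq R) (c s : R) :
  char_poly B = \prod_(m <- l) ('X - m%:P) ->
  char_poly (c%:M - s *: B) = \prod_(m <- l) ('X - (c - s * m)%:P).
Proof.
move=> chB.
have size_l : size l = n.
  by apply: succn_inj; rewrite -(size_char_poly B) chB size_prod_XsubC.
have [->|s0] := eqVneq s 0.
  rewrite scale0r subr0 char_poly_trig ?scalar_mx_is_trig //.
  rewrite (eq_bigr (fun=> 'X - c%:P)) => [|i _]; last by rewrite mxE eqxx.
  under [RHS]eq_bigr do rewrite mul0r subr0.
  by rewrite prodr_const card_ord big_const_seq count_predT iter_mulr_1 size_l.
(* char_poly_mx (c - s B) = -s (u - B) with u = (c - X) / s, so its determinant is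
   (-s)^n times char_poly B evaluated at u. *)
pose u : {poly R} := (c%:P - 'X) * s^-1%:P.
have cfu : commr_rmorph polyC u by move=> a; apply: mulrC.
have sNu : - s%:P * u = 'X - c%:P.
  have sV : s%:P * s^-1%:P = 1 by rewrite -polyCM mulfV.
  by rewrite /u mulrCA mulNr sV mulrN1 opprB.
rewrite /char_poly.
have -> : char_poly_mx (c%:M - s *: B) =
          (- s%:P) *: map_mx (horner_morph cfu) (char_poly_mx B).
  apply/matrixP => i j; rewrite !mxE; case: eqP => _;
  by rewrite ?mulr1n ?mulr0n !rmorphB /= ?horner_morphX ?rmorph0 horner_morphC
    ?mulrBr ?sNu polyCM; ring.
rewrite detZ det_map_mx -/(char_poly B) chB rmorph_prod -size_l.
rewrite -iter_mulr_1 -count_predT -big_const_seq -big_split /=.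
apply: eq_bigr => m _; rewrite rmorphB /= horner_morphX horner_morphC mulrBr sNu.
by rewrite polyCB polyCM; ring.
Qed.

Lemma natr_deg (R : nzRingType) (T : finType) (e : rel T) x :
  (deg e x)%:R = \sum_z (e x z)%:R :> R.
Proof.
rewrite /deg -sum1_card natr_sum big_mkcond /=.
by apply: eq_bigr => z _; rewrite inE; case: (e x z).
Qed.

Definition reduced_adj (R : nzRingType) (V : finType) (G : rel V) (r : V)
  (w w' : {x | x != r}) : R := (G (val w) (val w'))%:R - (G r (val w'))%:R.
Arguments reduced_adj R {V} G r w w'.

Section RegularGraph.
Variables (R : fieldType) (V : finType) (G : rel V) (d : nat) (r : V).
Hypothesis G_reg : regular G d.

Lemma char_adj_regular :
  char_fun (fun x y => (G x y)%:R : R) = ('X - d%:R%:P) * char_fun (reduced_adj R G r).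
Proof.
pose h (u : 'I_1 + {x | x != r}) := if u is inr w then val w else r.
have h_bij : bijective h.
  exists (fun x => if insub x is Some w then inr w else inl (ord0 : 'I_1)).
    by case=> [j|w] /=; rewrite ?valK // insubF ?(ord1 j) ?eqxx.
  by move=> x; case: insubP => [w _ <-|/negPn/eqP ->].
pose part (x : V) : 'I_1 := ord0.
have sum_part x j : \sum_(z | part z == j) ((G x z)%:R : R) = d%:R.
  by rewrite (ord1 j); under eq_bigl do rewrite eqxx; rewrite -natr_deg G_reg.
rewrite (char_fun_equitable (Q := fun _ _ => d%:R) h_bij _ sum_part) //.
  by rewrite /char_poly det_mx11 !mxE.
by move=> j; rewrite (ord1 j).
Qed.

Lemma char_reduced_adj (l : seq R) (c s : R) :
  char_fun (fun x y => (G x y)%:R) = \prod_(m <- d%:R :: l) ('X - m%:P) ->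
  char_fun (fun w w' => fun_one w w' * c - s * reduced_adj R G r w w') =
    \prod_(m <- l) ('X - (c - s * m)%:P).
Proof.
rewrite big_cons char_adj_regular => /(mulfI (monic_neq0 (monicXsubC _))) ch_red.
rewrite /char_fun -(char_poly_affine c s ch_red); congr char_poly.
apply/matrixP => i j; rewrite !mxE /fun_one (inj_eq enum_val_inj).
by case: eqP => _; rewrite ?mulr1n ?mulr0n; ring.
Qed.

End RegularGraph.

Section HJoin.
Variables (r : nat) (H : rel 'I_r) (V : finType) (part : V -> 'I_r) (e : rel V).
Hypotheses (H_irr : irreflexive H) (e_part : forall u v, e u v -> part u = part v).

Local Notation J := (hjoin H part e).
Local Notation part_size j := #|[set z | part z == j]|.

Lemma hjoin_same_part u v : part u = part v -> J u v = e u v.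
Proof. by move=> puv; rewrite /hjoin puv eqxx H_irr orbF. Qed.

Lemma hjoin_diff_part u v : part u != part v -> J u v = H (part u) (part v).
Proof. by move/negbTE => puv; rewrite /hjoin puv. Qed.

Lemma sum_hjoin_part (R : nzRingType) x j :
  \sum_(z | part z == j) (J x z)%:R =
    if part x == j then (deg e x)%:R else (H (part x) j)%:R * (part_size j)%:R :> R.
Proof.
case: eqP => [<-|/eqP pxj].
  rewrite natr_deg [RHS](bigID (fun z => part z == part x)) /= [X in _ = _ + X]big1 ?addr0.
    by apply: eq_bigr => z /eqP pz; rewrite hjoin_same_part.
  by move=> z; case exz: (e x z); rewrite // (e_part exz) eqxx.
rewrite (eq_bigr (fun=> (H (part x) j)%:R)) => [|z /eqP pz]; last first.
  by rewrite hjoin_diff_part pz // eq_sym.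
by rewrite sumr_const mulr_natr; congr (_ *+ _); apply: eq_card => z; rewrite inE.
Qed.

Lemma deg_hjoin (R : nzRingType) x :
  (deg J x)%:R = (deg e x)%:R + \sum_j (H (part x) j)%:R * (part_size j)%:R :> R.
Proof.
rewrite natr_deg (partition_big part predT) //=.
under eq_bigr do rewrite sum_hjoin_part.
rewrite (bigD1 (part x)) //= eqxx [in RHS](bigD1 (part x)) //= H_irr mul0r add0r.
by congr (_ + _); apply: eq_bigr => j /negbTE; rewrite eq_sym => ->.
Qed.

Variables (R : fieldType) (s : R) (dg sz : 'I_r -> nat).
Hypotheses (e_reg : forall x, deg e x = dg (part x)) (size_part : forall j, part_size j = sz j).

Definition hjoin_diag i : R :=
  1 + s ^+ 2 * ((dg i)%:R + \sum_j (H i j)%:R * (sz j)%:R - 1).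

Definition hjoin_lap x z : R := fun_one x z * hjoin_diag (part x) - s * (J x z)%:R.

Definition hjoin_quotient i j : R :=
  fun_one i j * hjoin_diag i - s * (if i == j then (dg i)%:R else (H i j)%:R * (sz j)%:R).

Lemma deformed_laplacian_hjoin : deformed_laplacian J s = fun_mx hjoin_lap.
Proof.
apply/matrixP => i j; rewrite !mxE /hjoin_lap /hjoin_diag /fun_one.
rewrite deg_hjoin e_reg (inj_eq enum_val_inj).
under eq_bigr do rewrite size_part.
by case: eqP => _; ring.
Qed.

Lemma sum_hjoin_lap x j : \sum_(z | part z == j) hjoin_lap x z = hjoin_quotient (part x) j.
Proof.
rewrite sumrB -mulr_suml -mulr_sumr sum_hjoin_part e_reg size_part /hjoin_quotient.
rewrite big_mkcond (bigD1 x) //= big1 ?addr0 => [|z /negbTE zx]; last first.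
  by rewrite /fun_one (eq_sym x) zx; case: ifP.
by rewrite /fun_one eqxx; case: (part x == j).
Qed.

Lemma hjoin_lap_diff x y u :
  part u = part x -> part x != part y -> hjoin_lap x y - hjoin_lap u y = 0.
Proof.
move=> pu pxy; have puy : part u != part y by rewrite pu.
have [xy|/negbTE xy] := eqVneq x y; first by rewrite xy eqxx in pxy.
have [uy|/negbTE uy] := eqVneq u y; first by rewrite uy eqxx in puy.
by rewrite /hjoin_lap /fun_one xy uy !hjoin_diff_part // pu subrr.
Qed.

Lemma hjoin_lap_same x y u :
  part u = part x -> part y = part x -> u != y ->
  hjoin_lap x y - hjoin_lap u y = fun_one x y * hjoin_diag (part x) - s * ((e x y)%:R - (e u y)%:R).
Proof.
move=> pu py /negbTE uy.
by rewrite /hjoin_lap /fun_one uy !hjoin_same_part ?pu ?py //= mul0r; ring.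
Qed.

Lemma char_deformed_laplacian_hjoin (W : finType) (h : 'I_r + W -> V) :
  bijective h -> (forall j, part (h (inl j)) = j) ->
  char_poly (deformed_laplacian J s) = char_poly (\matrix_(i, j) hjoin_quotient i j) *
    char_fun (fun w w' => hjoin_lap (h (inr w)) (h (inr w')) -
                          hjoin_lap (h (inl (part (h (inr w))))) (h (inr w'))).
Proof.
move=> h_bij part_rep; rewrite deformed_laplacian_hjoin.
exact: (char_fun_equitable (F := hjoin_lap) (Q := hjoin_quotient) h_bij part_rep sum_hjoin_lap).
Qed.

End HJoin.

Lemma row'_col'_mx_nat (R : Type) n (f : nat -> nat -> R) (i0 j0 : 'I_n.+1) :
  row' i0 (col' j0 (\matrix_(i < n.+1, j < n.+1) f i j)) =
  \matrix_(i < n, j < n) f (bump i0 i) (bump j0 j).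
Proof. by apply/matrixP => i j; rewrite !mxE. Qed.

Lemma det_mx22 (R : comNzRingType) (f : nat -> nat -> R) :
  \det (\matrix_(i < 2, j < 2) f i j) = f 0 0 * f 1 1 - f 0 1 * f 1 0.
Proof.
rewrite (expand_det_row _ 0) !big_ord_recr big_ord0 /= add0r.
by rewrite /cofactor !row'_col'_mx_nat !det_mx11 !mxE /=; ring.
Qed.

Lemma det_mx33 (R : comNzRingType) (f : nat -> nat -> R) :
  \det (\matrix_(i < 3, j < 3) f i j) =
    f 0 0 * (f 1 1 * f 2 2 - f 1 2 * f 2 1) - f 0 1 * (f 1 0 * f 2 2 - f 1 2 * f 2 0)
    + f 0 2 * (f 1 0 * f 2 1 - f 1 1 * f 2 0).
Proof.
rewrite (expand_det_row _ 0) !big_ord_recr big_ord0 /= add0r.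
rewrite /cofactor !row'_col'_mx_nat.
do 3 rewrite (det_mx22 (fun a b => f (bump _ a) (bump _ b))).
by rewrite !mxE /=; ring.
Qed.

Definition P4_quotient_entry (R : comNzRingType) (a b c1 c2 : R) (i j : nat) : R :=
  match i, j with
  | 0, 0 | 3, 3 => a | 1, 1 | 2, 2 => b
  | 1, 0 | 2, 3 => c1 | 0, 1 | 1, 2 | 2, 1 | 3, 2 => c2
  | _, _ => 0
  end.

Lemma char_poly_P4_quotient (R : comNzRingType) (a b c1 c2 : R) :
  char_poly (\matrix_(i < 4, j < 4) P4_quotient_entry a b c1 c2 i j) =
    ('X^2 - (a + b + c2)%:P * 'X + (a * (b + c2) - c1 * c2)%:P) *
    ('X^2 - (a + b - c2)%:P * 'X + (a * (b - c2) - c1 * c2)%:P).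
Proof.
pose g (i j : nat) := 'X *+ (i == j)%N - (P4_quotient_entry a b c1 c2 i j)%:P.
rewrite /char_poly.
have -> : char_poly_mx (\matrix_(i < 4, j < 4) P4_quotient_entry a b c1 c2 i j) =
          \matrix_(i < 4, j < 4) g i j.
  by apply/matrixP => i j; rewrite !mxE.
rewrite (expand_det_row _ 0) !big_ord_recr big_ord0 /= add0r.
rewrite /cofactor !row'_col'_mx_nat.
do 4 rewrite (det_mx33 (fun a b => g (bump _ a) (bump _ b))).
rewrite !mxE /g /= !(polyCD, polyCM, polyCN, polyCB, polyC0).
ring.
Qed.

Lemma deg_sum_rel_inl (T1 T2 : finType) (e1 : rel T1) (e2 : rel T2) x :
  deg (sum_rel e1 e2) (inl x) = deg e1 x.
Proof. by rewrite /deg -!sum1dep_card big_sumType /= big_pred0_eq addn0. Qed.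

Lemma deg_sum_rel_inr (T1 T2 : finType) (e1 : rel T1) (e2 : rel T2) x :
  deg (sum_rel e1 e2) (inr x) = deg e2 x.
Proof. by rewrite /deg -!sum1dep_card big_sumType /= big_pred0_eq. Qed.

Lemma path_graph_irr n : irreflexive (@path_graph n).
Proof. by move=> i; rewrite /path_graph orbb eqn_leq ltnn. Qed.

Section P4Join.
Variables (V1 V2 : finType) (G1 : rel V1) (G2 : rel V2) (d1 d2 : nat).
Hypotheses (reg1 : regular G1 d1) (reg2 : regular G2 d2).

Local Notation T := (P4_vert V1 V2).
Local Notation part := (@P4_part V1 V2).
Local Notation e := (sum_rel (sum_rel (sum_rel G1 G2) G2) G1).

Definition P4_deg (i : 'I_4) : nat := if (i : nat) \in [:: 1; 2]%N then d2 else d1.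
Definition P4_size (i : 'I_4) : nat := if (i : nat) \in [:: 1; 2]%N then #|V2| else #|V1|.

Lemma P4_sum_rel_part u v : e u v -> part u = part v.
Proof. by case: u v => [[[u|u]|u]|u] [[[v|v]|v]|v]. Qed.

Lemma deg_P4_sum_rel x : deg e x = P4_deg (part x).
Proof.
by case: x => [[[x|x]|x]|x];
  rewrite ?deg_sum_rel_inl ?deg_sum_rel_inr /P4_deg /= inordK ?reg1 ?reg2.
Qed.

Lemma card_P4_part j : #|[set z : T | part z == j]| = P4_size j.
Proof.
have sum1_const (A : finType) (c : bool) : (\sum_(i : A | c) 1 = if c then #|A| else 0)%N.
  by case: c; rewrite ?big_pred0_eq ?sum1_card.
rewrite -sum1dep_card !big_sumType /P4_size.
by case: j => -[|[|[|[|m]]]] hj //=; rewrite -!val_eqE /= !inordK // !sum1_const /= ?addn0.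
Qed.

Variables (r1 : V1) (r2 : V2).

Local Notation W :=
  ((({x : V1 | x != r1} + {x : V2 | x != r2}) + {x : V2 | x != r2}) + {x : V1 | x != r1})%type.

Definition P4_lift (u : 'I_4 + W) : T :=
  match u with
  | inl j => match val j with
             | 0 => inl (inl (inl r1)) | 1 => inl (inl (inr r2))
             | 2 => inl (inr r2) | _ => inr r1 end
  | inr (inl (inl (inl w))) => inl (inl (inl (val w)))
  | inr (inl (inl (inr w))) => inl (inl (inr (val w)))
  | inr (inl (inr w)) => inl (inr (val w))
  | inr (inr w) => inr (val w)
  end.

Lemma P4_lift_bij : bijective P4_lift.
Proof.
pose unlift (x : T) : 'I_4 + W :=
  match x with
  | inl (inl (inl y)) => if insub y is Some w then inr (inl (inl (inl w))) else inl (inord 0)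
  | inl (inl (inr y)) => if insub y is Some w then inr (inl (inl (inr w))) else inl (inord 1)
  | inl (inr y) => if insub y is Some w then inr (inl (inr w)) else inl (inord 2)
  | inr y => if insub y is Some w then inr (inr w) else inl (inord 3)
  end.
exists unlift.
  case=> [j|[[[w|w]|w]|w]] /=; rewrite ?valK //.
  by case: j => -[|[|[|[|m]]]] hj //=; rewrite insubF ?eqxx //;
    congr inl; apply: val_inj; rewrite /= inordK.
by case=> [[[y|y]|y]|y] /=; case: insubP => [w _ <-|/negPn/eqP ->] //=; rewrite inordK.
Qed.

Lemma P4_part_lift j : part (P4_lift (inl j)) = j.
Proof. by case: j => -[|[|[|[|m]]]] hj //=; apply: val_inj; rewrite /= inordK. Qed.

Variables (R : fieldType) (s : R).

Local Notation n1 := (#|V1|%:R : R).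
Local Notation n2 := (#|V2|%:R : R).
Local Notation lap := (hjoin_lap (@path_graph 4) part e s P4_deg P4_size).
Local Notation diag := (hjoin_diag (@path_graph 4) s P4_deg P4_size).
Local Notation reduced u v :=
  (lap (P4_lift (inr u)) (P4_lift (inr v)) -
   lap (P4_lift (inl (part (P4_lift (inr u))))) (P4_lift (inr v))).

Lemma P4_diag i : diag i = if (i : nat) \in [:: 1; 2]%N
  then 1 + s ^+ 2 * (d2%:R + n1 + n2 - 1) else 1 + s ^+ 2 * (d1%:R + n2 - 1).
Proof.
rewrite /hjoin_diag /P4_deg /P4_size !big_ord_recl big_ord0 /path_graph /bump /=.
by case: i => -[|[|[|[|m]]]] hi //=; ring.
Qed.

Lemma char_P4_block (V : finType) (G : rel V) d (rt : V) (emb : V -> T) i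
    (inj : {x | x != rt} -> W) (L : seq R) :
  regular G d -> injective emb -> (forall a b, e (emb a) (emb b) = G a b) ->
  (forall a, part (emb a) = i) -> P4_lift (inl i) = emb rt ->
  (forall w, P4_lift (inr (inj w)) = emb (val w)) ->
  char_fun (fun x y => (G x y)%:R) = \prod_(m <- d%:R :: L) ('X - m%:P) ->
  char_fun (fun w w' => reduced (inj w) (inj w')) =
    \prod_(m <- L) ('X - (diag i - s * m)%:P).
Proof.
move=> G_reg emb_inj e_emb part_emb rep_i lift_inj chG.
rewrite -(char_reduced_adj rt G_reg (diag i) s chG); apply: eq_char_fun => w w'.
rewrite !lift_inj part_emb rep_i (hjoin_lap_same _ (@path_graph_irr 4)) ?part_emb //.
  by rewrite /fun_one (inj_eq emb_inj) !e_emb.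
by rewrite (inj_eq emb_inj) eq_sym (valP w').
Qed.

Lemma char_P4_reduced (L1 L2 : seq R) :
  char_fun (fun x y => (G1 x y)%:R) = \prod_(m <- d1%:R :: L1) ('X - m%:P) ->
  char_fun (fun x y => (G2 x y)%:R) = \prod_(m <- d2%:R :: L2) ('X - m%:P) ->
  let P1 := \prod_(m <- L1) ('X - (s ^+ 2 * (d1%:R + n2 - 1) - s * m + 1)%:P) in
  let P2 := \prod_(m <- L2) ('X - (s ^+ 2 * (d2%:R + n1 + n2 - 1) - s * m + 1)%:P) in
  char_fun (fun u v : W => reduced u v) = P1 * P2 * P2 * P1.
Proof.
move=> chG1 chG2 P1 P2.
have reduced_diff u v : part (P4_lift (inr u)) != part (P4_lift (inr v)) -> reduced u v = 0.
  exact/hjoin_lap_diff/P4_part_lift.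
rewrite char_fun_sum; last first.
  by move=> x [[y|y]|y]; apply: reduced_diff; rewrite /= -val_eqE /= !inordK.
rewrite char_fun_sum; last first.
  by move=> x [y|y]; apply: reduced_diff; rewrite /= -val_eqE /= !inordK.
rewrite char_fun_sum; last first.
  by move=> x y; apply: reduced_diff; rewrite /= -val_eqE /= !inordK.
rewrite (char_P4_block (i := inord 0) (emb := fun a => inl (inl (inl a)))
           (inj := fun w => inl (inl (inl w))) reg1 _ _ _ _ _ chG1);
  try by [move=> ? ? [] | rewrite /= ?inordK].
rewrite (char_P4_block (i := inord 1) (emb := fun a => inl (inl (inr a)))
           (inj := fun w => inl (inl (inr w))) reg2 _ _ _ _ _ chG2);
  try by [move=> ? ? [] | rewrite /= ?inordK].
rewrite (char_P4_block (i := inord 2) (emb := fun a => inl (inr a))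
           (inj := fun w => inl (inr w)) reg2 _ _ _ _ _ chG2);
  try by [move=> ? ? [] | rewrite /= ?inordK].
rewrite (char_P4_block (i := inord 3) (emb := inr) (inj := inr) reg1 _ _ _ _ _ chG1);
  try by [move=> ? ? [] | rewrite /= ?inordK].
rewrite !P4_diag !inordK //=.
by congr (_ * _ * _ * _); apply: eq_bigr => m _; congr ('X - _%:P); ring.
Qed.

Lemma P4_quotient_hjoin :
  let a := s ^+ 2 * (d1%:R + n2 - 1) - s * d1%:R + 1 in
  let b := s ^+ 2 * (d2%:R + (n1 + n2) - 1) - s * d2%:R + 1 in
  \matrix_(i, j) hjoin_quotient (@path_graph 4) s P4_deg P4_size i j =
    \matrix_(i < 4, j < 4) P4_quotient_entry a b (- (s * n1)) (- (s * n2)) i j.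
Proof.
apply/matrixP => i j; rewrite !mxE /hjoin_quotient P4_diag /fun_one -val_eqE.
by case: i => -[|[|[|[|m]]]] hi //; case: j => -[|[|[|[|n]]]] hj //=;
  rewrite /P4_deg /P4_size /path_graph //=; ring.
Qed.

Lemma char_deformed_laplacian_P4_join (L1 L2 : seq R) :
  char_fun (fun x y => (G1 x y)%:R) = \prod_(m <- d1%:R :: L1) ('X - m%:P) ->
  char_fun (fun x y => (G2 x y)%:R) = \prod_(m <- d2%:R :: L2) ('X - m%:P) ->
  let a := s ^+ 2 * (d1%:R + n2 - 1) - s * d1%:R + 1 in
  let b := s ^+ 2 * (d2%:R + (n1 + n2) - 1) - s * d2%:R + 1 in
  let P1 := \prod_(m <- L1) ('X - (s ^+ 2 * (d1%:R + n2 - 1) - s * m + 1)%:P) in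
  let P2 := \prod_(m <- L2) ('X - (s ^+ 2 * (d2%:R + n1 + n2 - 1) - s * m + 1)%:P) in
  char_poly (deformed_laplacian (P4_join G1 G2) s) =
    ('X^2 - (a + b - s * n2)%:P * 'X + (a * (b - s * n2) - s * n1 * (s * n2))%:P) *
    ('X^2 - (a + b + s * n2)%:P * 'X + (a * (b + s * n2) - s * n1 * (s * n2))%:P) *
    (P1 * P2 * P2 * P1).
Proof.
move=> chG1 chG2 a b P1 P2.
rewrite (char_deformed_laplacian_hjoin (@path_graph_irr 4) P4_sum_rel_part s
           deg_P4_sum_rel card_P4_part P4_lift_bij P4_part_lift).
rewrite P4_quotient_hjoin char_poly_P4_quotient (char_P4_reduced chG1 chG2).
congr (_ * _ * _); congr ('X^2 - _ * 'X + _); rewrite -/a -/b; congr _%:P; ring.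
Qed.

End P4Join.

Lemma spectrum_cons (R : comNzRingType) n (A : 'M[R]_n) (l : seq R) d :
  (0 < n)%N -> spectrum_is A l -> l`_0 = d -> exists L, l = d :: L.
Proof.
case: l => [|x L] n_gt0 spA /= <-; last by exists L.
by move: (size_char_poly A); rewrite spA big_nil size_poly1 => -[n0]; rewrite -n0 in n_gt0.
Qed.

Lemma perm_rem2_cat_cons (T : eqType) (x y : T) (L : seq T) :
  x = y -> perm_eq (rem y (rem y ((x :: L) ++ (x :: L)))) (L ++ L).
Proof.
move=> <- /=; rewrite eqxx -(perm_cons x) perm_sym.
apply: perm_trans _ (perm_to_rem _); last by rewrite mem_cat mem_head orbT.
by rewrite -cat1s perm_catCA.
Qed.

Lemma prod_XsubC_rem2_cat_map (R : comNzRingType) (f : R -> R) (x y : R) (L : seq R) :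
  f x = y ->
  \prod_(z <- rem y (rem y ([seq f m | m <- x :: L] ++ [seq f m | m <- x :: L]))) ('X - z%:P) =
    \prod_(m <- L) ('X - (f m)%:P) * \prod_(m <- L) ('X - (f m)%:P).
Proof. by move=> fxy; rewrite map_cons (perm_big _ (perm_rem2_cat_cons _ fxy)) big_cat big_map. Qed.

Lemma mul_XsubC_quadratic_roots (R : rcfType) (u D c : R) :
  0 <= D -> u ^+ 2 - D = 4 * c ->
  ('X - ((u + Num.sqrt D) / 2)%:P) * ('X - ((u - Num.sqrt D) / 2)%:P) =
    'X^2 - u%:P * 'X + c%:P.
Proof.
move=> D_ge0 uDc; have sqrtD2 : Num.sqrt D ^+ 2 = D by rewrite sqr_sqrtr.
have sum_roots : (u + Num.sqrt D) / 2 + (u - Num.sqrt D) / 2 = u by field.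
have prod_roots : (u + Num.sqrt D) / 2 * ((u - Num.sqrt D) / 2) = c.
  have -> : c = (u ^+ 2 - Num.sqrt D ^+ 2) / 4 by rewrite sqrtD2 uDc; field.
  by field.
move: sum_roots prod_roots; set r := (u + _) / 2; set r' := (u - _) / 2.
by clearbody r r' => <- <-; rewrite polyCD polyCM; ring.
Qed.

Unset Implicit Arguments.

Theorem mainTheorem12 (R : rcfType) (V1 V2 : finType) (G1 : rel V1) (G2 : rel V2)
    (d1 d2 : nat) (lam1 lam2 : seq R) (s : R) :
  (0 < #|V1|)%N -> (0 < #|V2|)%N ->
  simple_graph G1 -> simple_graph G2 ->
  regular G1 d1 -> regular G2 d2 ->
  spectrum_is (adjmx R G1) lam1 -> lam1`_0 = d1%:R ->
  spectrum_is (adjmx R G2) lam2 -> lam2`_0 = d2%:R ->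
  let n1 : R := (#|V1|)%:R in
  let n2 : R := (#|V2|)%:R in
  let a := s ^+ 2 * (d1%:R + n2 - 1) - s * d1%:R + 1 in
  let b := s ^+ 2 * (d2%:R + (n1 + n2) - 1) - s * d2%:R + 1 in
  let sM1 := [seq s ^+ 2 * (d1%:R + n2 - 1) - s * l + 1 | l <- lam1] in
  let sM2 := [seq s ^+ 2 * (d2%:R + n1 + n2 - 1) - s * l + 1 | l <- lam2] in
  let sF4 :=
    [:: (a + b + s * n2 + Num.sqrt ((a - b - s * n2) ^+ 2 + 4 * s ^+ 2 * n1 * n2)) / 2;
        (a + b + s * n2 - Num.sqrt ((a - b - s * n2) ^+ 2 + 4 * s ^+ 2 * n1 * n2)) / 2;
        (a + b - s * n2 + Num.sqrt ((a - b + s * n2) ^+ 2 + 4 * s ^+ 2 * n1 * n2)) / 2;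
        (a + b - s * n2 - Num.sqrt ((a - b + s * n2) ^+ 2 + 4 * s ^+ 2 * n1 * n2)) / 2] in
  spectrum_is (deformed_laplacian (P4_join G1 G2) s)
    (rem a (rem a (sM1 ++ sM1)) ++ rem b (rem b (sM2 ++ sM2)) ++ sF4).
Proof.
move=> V1_gt0 V2_gt0 _ _ reg1 reg2 sp1 head1 sp2 head2.
have [L1 def_lam1] := spectrum_cons V1_gt0 sp1 head1.
have [L2 def_lam2] := spectrum_cons V2_gt0 sp2 head2.
have [[r1 _] [r2 _]] := (card_gt0P V1_gt0, card_gt0P V2_gt0).
rewrite def_lam1 def_lam2 in sp1 sp2 * => n1 n2 a b sM1 sM2 sF4.
have disc_ge0 x : 0 <= x ^+ 2 + 4 * s ^+ 2 * n1 * n2.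
  exact: addr_ge0 (sqr_ge0 x)
    (mulr_ge0 (mulr_ge0 (mulr_ge0 (ler0n _ 4) (sqr_ge0 s)) (ler0n _ _)) (ler0n _ _)).
rewrite /spectrum_is (char_deformed_laplacian_P4_join reg1 reg2 r1 r2 s sp1 sp2) !big_cat.
rewrite !prod_XsubC_rem2_cat_map //; last by rewrite /b addrA.
have -> : \prod_(x <- sF4) ('X - x%:P) =
    ('X^2 - (a + b + s * n2)%:P * 'X + (a * (b + s * n2) - s * n1 * (s * n2))%:P) *
    ('X^2 - (a + b - s * n2)%:P * 'X + (a * (b - s * n2) - s * n1 * (s * n2))%:P).
  rewrite !big_cons big_nil mulr1 mulrA.
  rewrite (mul_XsubC_quadratic_roots (c := a * (b + s * n2) - s * n1 * (s * n2)) (disc_ge0 _));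
    last by ring.
  by rewrite (mul_XsubC_quadratic_roots (c := a * (b - s * n2) - s * n1 * (s * n2)) (disc_ge0 _));
    last by ring.
by rewrite /a /b /n1 /n2 /=; ring.
Qed.
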